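(* Let $(\mathcal{E},\mathcal{M})$ be a stable orthogonal factorization system on a category $\mathcal{D}$ with pullbacks, and let $\mathcal{A}$ be a category with a terminal object $1$. Let $(\mathcal{E}',\mathcal{M}')$ be the factorization system on $[\mathcal{A},\mathcal{D}]$ where $\mathcal{E}'$ consists of the natural transformations $e$ with $e_1\in\mathcal{E}$ and $\mathcal{M}'$ consists of the cartesian natural transformations $m$ with $m_1\in\mathcal{M}$. Then $(\mathcal{E}',\mathcal{M}')$ and the componentwise lifting of $(\mathcal{E},\mathcal{M})$ to $[\mathcal{A},\mathcal{D}]$ both restrict to the same factorization system on $\mathrm{CartNt}[\mathcal{A},\mathcal{D}]$, the category of all functors $\mathcal{A}\to\mathcal{D}$ and cartesian natural transformations.
   Context: An orthogonal factorization system $(\mathcal{E},\mathcal{M})$: both classes contain all isomorphisms and are closed under composition; each commuting square $g\circ e = m\circ f$ with $e\in\mathcal{E}$, $m\in\mathcal{M}$ has a unique diagonal; every morphism factors as $m\circ e$ with $e\in\mathcal{E}$, $m\in\mathcal{M}$. It is stable if $\mathcal{E}$ is closed under pullback along arbitrary morphisms. A natural transformation is cartesian if all its naturality squares are pullbacks. The componentwise lifting consists of the natural transformations all of whose components lie in $\mathcal{E}$, respectively in $\mathcal{M}$. Restricting a factorization system to $\mathrm{CartNt}[\mathcal{A},\mathcal{D}]$ means intersecting both classes with the cartesian natural transformations. *)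

From Stdlib Require Import FunctionalExtensionality ProofIrrelevance.

Set Implicit Arguments.
Unset Strict Implicit.

Record Category := {
  Ob :> Type;
  Hom : Ob -> Ob -> Type;
  idm : forall a, Hom a a;
  comp : forall a b c, Hom b c -> Hom a b -> Hom a c;
  comp_id_l : forall a b (f : Hom a b), comp (idm b) f = f;
  comp_id_r : forall a b (f : Hom a b), comp f (idm a) = f;
  comp_assoc : forall a b c d (f : Hom a b) (g : Hom b c) (h : Hom c d),
      comp h (comp g f) = comp (comp h g) f
}.
Arguments Hom {C} a b : rename.
Arguments idm {C} a : rename.
Arguments comp {C a b c} g f : rename.

Notation "g ∘ f" := (comp g f) (at level 40, left associativity).

Definition MorClass (C : Category) := forall a b : C, Hom a b -> Prop.

Definition is_terminal (C : Category) (t : C) : Prop :=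
  forall a : C, exists! f : Hom a t, True.

Definition is_pullback (C : Category) (p a b c : C)
  (pa : Hom p a) (pb : Hom p b) (f : Hom a c) (g : Hom b c) : Prop :=
  f ∘ pa = g ∘ pb /\
  forall (q : C) (qa : Hom q a) (qb : Hom q b),
    f ∘ qa = g ∘ qb -> exists! u : Hom q p, pa ∘ u = qa /\ pb ∘ u = qb.

Definition has_pullbacks (C : Category) : Prop :=
  forall (a b c : C) (f : Hom a c) (g : Hom b c),
    exists (p : C) (pa : Hom p a) (pb : Hom p b), is_pullback pa pb f g.

Definition stable (C : Category) (E : MorClass C) : Prop :=
  forall (p a b c : C) (pa : Hom p a) (e' : Hom p b) (e : Hom a c) (g : Hom b c),
    is_pullback pa e' e g -> E _ _ e -> E _ _ e'.

(** * Orthogonal factorization systems on a wide subcategory.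
    [W] selects the morphisms of a wide subcategory of C (same objects,
    composition and identities of C).  [OFS_in C W E M] says that (E, M) is
    an orthogonal factorization system on that subcategory: all notions
    (isomorphisms, diagonals, factorizations) are taken inside it. *)
Definition is_iso_in (C : Category) (W : MorClass C) (a b : C) (f : Hom a b) : Prop :=
  W _ _ f /\ exists g : Hom b a, W _ _ g /\ g ∘ f = idm a /\ f ∘ g = idm b.

Definition OFS_in (C : Category) (W E M : MorClass C) : Prop :=
  (forall a b (f : Hom a b), E _ _ f -> W _ _ f) /\
  (forall a b (f : Hom a b), M _ _ f -> W _ _ f) /\
  (forall a b (f : Hom a b), is_iso_in W f -> E _ _ f) /\
  (forall a b (f : Hom a b), is_iso_in W f -> M _ _ f) /\
  (forall a b c (f : Hom a b) (g : Hom b c), E _ _ f -> E _ _ g -> E _ _ (g ∘ f)) /\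
  (forall a b c (f : Hom a b) (g : Hom b c), M _ _ f -> M _ _ g -> M _ _ (g ∘ f)) /\
  (forall a b c d (e : Hom a b) (f : Hom a c) (g : Hom b d) (m : Hom c d),
      E _ _ e -> M _ _ m -> W _ _ f -> W _ _ g -> g ∘ e = m ∘ f ->
      exists dg : Hom b c,
        (W _ _ dg /\ dg ∘ e = f /\ m ∘ dg = g) /\
        forall dg' : Hom b c, W _ _ dg' -> dg' ∘ e = f -> m ∘ dg' = g -> dg' = dg) /\
  (forall a b (h : Hom a b), W _ _ h ->
      exists (x : C) (e : Hom a x) (m : Hom x b), E _ _ e /\ M _ _ m /\ h = m ∘ e).

Definition OFS (C : Category) (E M : MorClass C) : Prop :=
  OFS_in (fun _ _ _ => True) E M.

Record Functor (A D : Category) := {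
  fobj :> A -> D;
  fmap : forall a b : A, Hom a b -> Hom (fobj a) (fobj b);
  fmap_id : forall a, fmap (idm a) = idm (fobj a);
  fmap_comp : forall a b c (f : Hom a b) (g : Hom b c),
      fmap (g ∘ f) = fmap g ∘ fmap f
}.
Arguments fmap {A D} F {a b} f : rename.

Record NatTrans (A D : Category) (F G : Functor A D) := {
  cmp :> forall a : A, Hom (F a) (G a);
  naturality : forall a b (f : Hom a b), cmp b ∘ fmap F f = fmap G f ∘ cmp a
}.

Lemma nt_eq (A D : Category) (F G : Functor A D) (al be : NatTrans F G) :
  (forall a, al a = be a) -> al = be.
Proof.
  destruct al as [c1 n1], be as [c2 n2]; simpl; intros H.
  assert (c1 = c2) by (apply functional_extensionality_dep; exact H).
  subst c2. f_equal. apply proof_irrelevance.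
Qed.

Definition nt_id (A D : Category) (F : Functor A D) : NatTrans F F.
Proof.
  refine {| cmp := fun a => idm (F a) |}.
  intros a b f. rewrite comp_id_l, comp_id_r. reflexivity.
Defined.

Definition nt_comp (A D : Category) (F G H : Functor A D)
  (be : NatTrans G H) (al : NatTrans F G) : NatTrans F H.
Proof.
  refine {| cmp := fun a => be a ∘ al a |}.
  intros a b f. rewrite <- comp_assoc, naturality, comp_assoc, naturality,
    comp_assoc. reflexivity.
Defined.

Definition FunCat (A D : Category) : Category.
Proof.
  refine {| Ob := Functor A D; Hom := @NatTrans A D;
            idm := @nt_id A D; comp := @nt_comp A D |}.
  - intros F G al. apply nt_eq. intro x. simpl. apply comp_id_l.
  - intros F G al. apply nt_eq. intro x. simpl. apply comp_id_r.
  - intros F G H K al be ga. apply nt_eq. intro x. simpl. apply comp_assoc.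
Defined.

Definition cartesian (A D : Category) : MorClass (FunCat A D) :=
  fun F G (al : NatTrans F G) =>
    forall (a b : A) (f : Hom a b),
      is_pullback (fmap F f) (al a) (al b) (fmap G f).

Definition componentwise (A D : Category) (K : MorClass D) : MorClass (FunCat A D) :=
  fun F G (al : NatTrans F G) => forall a : A, K _ _ (al a).

(** The classes E' and M' (relative to the chosen terminal object t of A). *)
Definition Eprime (A D : Category) (t : A) (E : MorClass D) : MorClass (FunCat A D) :=
  fun F G (al : NatTrans F G) => E _ _ (al t).

Definition Mprime (A D : Category) (t : A) (M : MorClass D) : MorClass (FunCat A D) :=
  fun F G (al : NatTrans F G) => cartesian al /\ M _ _ (al t).

Definition restrict_cart (A D : Category) (K : MorClass (FunCat A D)) : MorClass (FunCat A D) :=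
  fun F G al => K F G al /\ cartesian al.

(* If α is cartesian, each component α_a is a pullback of α_1 (naturality
   square of a → 1).  The left class of a stable factorization system is
   pullback-stable by hypothesis and the right class always is, so on
   cartesian transformations E' and M' agree with the componentwise classes.
   It remains to see that the componentwise classes form a factorization
   system on CartNt[A,D]: diagonals are taken componentwise (they are natural
   by uniqueness and cartesian by pullback cancellation), and a cartesian h
   factors through the functor a ↦ (pullback of m_1 along Z(a → 1)), where
   h_1 = m_1 ∘ e_1; its components e_a are pullbacks of e_1, hence lie in E. *)
From Stdlib Require Import IndefiniteDescription Setoid.

Set Implicit Arguments.
Unset Strict Implicit.

Section Pullbacks.
Variable C : Category.

Lemma pullback_sym (p a b c : C) (pa : Hom p a) (pb : Hom p b)
  (f : Hom a c) (g : Hom b c) :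
  is_pullback pa pb f g -> is_pullback pb pa g f.
Proof.
  intros [Hsq Huniv]. split; [symmetry; exact Hsq|].
  intros q qb qa Hq.
  destruct (Huniv q qa qb (eq_sym Hq)) as [u [[Hu1 Hu2] Hu]].
  exists u. split; [split; assumption|].
  intros v [Hv1 Hv2]. apply Hu. split; assumption.
Qed.

Lemma pullback_jointly_monic (p a b c : C) (pa : Hom p a) (pb : Hom p b)
  (f : Hom a c) (g : Hom b c) :
  is_pullback pa pb f g ->
  forall q (u v : Hom q p), pa ∘ u = pa ∘ v -> pb ∘ u = pb ∘ v -> u = v.
Proof.
  intros [Hsq Huniv] q u v Ha Hb.
  destruct (Huniv q (pa ∘ u) (pb ∘ u)) as [w [_ Hw]].
  { rewrite !comp_assoc, Hsq. reflexivity. }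
  rewrite <- (Hw u (conj eq_refl eq_refl)). apply Hw. split; symmetry; assumption.
Qed.

Definition pullback_lift (p a b c : C) (pa : Hom p a) (pb : Hom p b)
  (f : Hom a c) (g : Hom b c) (H : is_pullback pa pb f g)
  (q : C) (qa : Hom q a) (qb : Hom q b) (Hq : f ∘ qa = g ∘ qb) : Hom q p :=
  proj1_sig (constructive_indefinite_description _ (proj2 H q qa qb Hq)).

Lemma pullback_lift_spec (p a b c : C) (pa : Hom p a) (pb : Hom p b)
  (f : Hom a c) (g : Hom b c) (H : is_pullback pa pb f g)
  (q : C) (qa : Hom q a) (qb : Hom q b) (Hq : f ∘ qa = g ∘ qb) :
  pa ∘ pullback_lift H Hq = qa /\ pb ∘ pullback_lift H Hq = qb.
Proof. exact (proj1 (proj2_sig (constructive_indefinite_description _ (proj2 H q qa qb Hq)))). Qed.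

Lemma pullback_paste (P Q R S T U : C) (x : Hom P Q) (y : Hom Q R)
  (p : Hom P S) (q : Hom Q T) (r : Hom R U) (z : Hom S T) (w : Hom T U) :
  is_pullback x p q z -> is_pullback y q r w -> is_pullback (y ∘ x) p r (w ∘ z).
Proof.
  intros HL HR. pose proof HL as [HLsq HLuniv]. pose proof HR as [HRsq HRuniv].
  split.
  - rewrite comp_assoc, HRsq, <- comp_assoc, HLsq, comp_assoc. reflexivity.
  - intros V a b Hab.
    destruct (HRuniv V a (z ∘ b)) as [k [[Hk1 Hk2] _]].
    { rewrite Hab, comp_assoc. reflexivity. }
    destruct (HLuniv V k b Hk2) as [l [[Hl1 Hl2] _]].
    exists l. split.
    + split; [rewrite <- comp_assoc, Hl1; exact Hk1 | exact Hl2].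
    + intros l' [H1 H2]. apply (pullback_jointly_monic HL).
      * apply (pullback_jointly_monic HR).
        -- rewrite Hl1, Hk1, comp_assoc, H1. reflexivity.
        -- rewrite Hl1, Hk2, comp_assoc, HLsq, <- comp_assoc, H2. reflexivity.
      * rewrite Hl2, H2. reflexivity.
Qed.

Lemma pullback_cancel (P Q R S T U : C) (x : Hom P Q) (y : Hom Q R)
  (p : Hom P S) (q : Hom Q T) (r : Hom R U) (z : Hom S T) (w : Hom T U) :
  q ∘ x = z ∘ p -> is_pullback y q r w -> is_pullback (y ∘ x) p r (w ∘ z) ->
  is_pullback x p q z.
Proof.
  intros Hsq HR HO. pose proof HR as [HRsq _]. pose proof HO as [_ HOuniv].
  split; [exact Hsq|].
  intros V a b Hab.
  destruct (HOuniv V (y ∘ a) b) as [l [[Hl1 Hl2] _]].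
  { rewrite comp_assoc, HRsq, <- comp_assoc, Hab, comp_assoc. reflexivity. }
  assert (Hxl : x ∘ l = a).
  { apply (pullback_jointly_monic HR).
    - rewrite comp_assoc. exact Hl1.
    - rewrite comp_assoc, Hsq, <- comp_assoc, Hl2. symmetry. exact Hab. }
  exists l. split; [split; assumption|].
  intros l' [H1 H2]. apply (pullback_jointly_monic HO).
  - rewrite <- !comp_assoc, H1, Hxl. reflexivity.
  - rewrite H2, Hl2. reflexivity.
Qed.

Record Pullback (a b c : C) (f : Hom a c) (g : Hom b c) := {
  pb_obj : C;
  pb_fst : Hom pb_obj a;
  pb_snd : Hom pb_obj b;
  pb_is_pullback : is_pullback pb_fst pb_snd f g
}.

Definition choose_pullback (hpb : has_pullbacks C) (a b c : C)
  (f : Hom a c) (g : Hom b c) : Pullback f g.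
Proof.
  destruct (constructive_indefinite_description _ (hpb a b c f g)) as [p Hp].
  destruct (constructive_indefinite_description _ Hp) as [pa Hpa].
  destruct (constructive_indefinite_description _ Hpa) as [pb Hpb].
  exact (Build_Pullback Hpb).
Defined.

Definition terminal_map (t : C) (ht : is_terminal t) (a : C) : Hom a t :=
  proj1_sig (constructive_indefinite_description _ (ht a)).

Lemma terminal_hom_unique (t : C) (ht : is_terminal t) (a : C) (f g : Hom a t) :
  f = g.
Proof.
  destruct (ht a) as [u [_ Hu]]. rewrite <- (Hu f I), <- (Hu g I). reflexivity.
Qed.

End Pullbacks.

Lemma OFS_in_iff (C : Category) (W E M E' M' : MorClass C) :
  (forall a b (f : Hom a b), E _ _ f <-> E' _ _ f) ->
  (forall a b (f : Hom a b), M _ _ f <-> M' _ _ f) ->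
  OFS_in W E M -> OFS_in W E' M'.
Proof.
  intros HE HM. unfold OFS_in. setoid_rewrite HE. setoid_rewrite HM. exact (fun H => H).
Qed.

Section FactorizationSystems.
Variables (C : Category) (E M : MorClass C).
Hypothesis hofs : OFS E M.

Lemma OFS_diagonal (a b c d : C) (e : Hom a b) (f : Hom a c) (g : Hom b d) (m : Hom c d) :
  E e -> M m -> g ∘ e = m ∘ f -> exists! dg : Hom b c, dg ∘ e = f /\ m ∘ dg = g.
Proof.
  destruct hofs as (_ & _ & _ & _ & _ & _ & Hdiag & _).
  intros He Hm Hsq.
  destruct (Hdiag _ _ _ _ e f g m He Hm I I Hsq) as [dg [[_ Hdg] Hu]].
  exists dg. split; [exact Hdg|]. intros dg' [H1 H2]. symmetry. exact (Hu dg' I H1 H2).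
Qed.

(* Factor m' = n ∘ e'.  The diagonal of the square (g ∘ n) ∘ e' = m ∘ pa
   yields a section k of e' through the pullback, and orthogonality of e'
   to n forces e' ∘ k = id; so e' is an isomorphism and m' = n ∘ e' ∈ M. *)
Lemma OFS_stable_M : stable M.
Proof.
  pose proof hofs as (_ & _ & _ & HisoM & _ & HcompM & _ & Hfact).
  intros p a b c pa m' m g HP Hm.
  destruct (Hfact _ _ m' I) as (X & e' & n & He' & Hn & Hm').
  destruct (OFS_diagonal (f := pa) (g := g ∘ n) He' Hm) as [d [[Hd1 Hd2] _]].
  { rewrite <- comp_assoc, <- Hm'. symmetry. exact (proj1 HP). }
  destruct (proj2 HP X d n Hd2) as [k [[Hk1 Hk2] _]].
  assert (Hke : k ∘ e' = idm p).
  { apply (pullback_jointly_monic HP).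
    - rewrite comp_assoc, Hk1, Hd1, comp_id_r. reflexivity.
    - rewrite comp_assoc, Hk2, comp_id_r. symmetry. exact Hm'. }
  assert (Hek : e' ∘ k = idm X).
  { destruct (OFS_diagonal (f := e') (g := n) He' Hn eq_refl) as [d0 [_ Hu]].
    rewrite <- (Hu (e' ∘ k)), <- (Hu (idm X)); [reflexivity | |]; split.
    - apply comp_id_l.
    - apply comp_id_r.
    - rewrite <- comp_assoc, Hke. apply comp_id_r.
    - rewrite comp_assoc, <- Hm'. exact Hk2. }
  rewrite Hm'. apply HcompM; [|exact Hn].
  apply HisoM. split; [exact I|].
  exists k. split; [exact I | split; assumption].
Qed.

End FactorizationSystems.

Section Cartesian.
Variables A D : Category.

Lemma cartesian_comp (F G H : Functor A D) (al : NatTrans F G) (be : NatTrans G H) :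
  cartesian al -> cartesian be -> cartesian (nt_comp be al).
Proof.
  intros Hal Hbe a b f. apply pullback_sym.
  apply pullback_paste with (q := fmap G f); apply pullback_sym; auto.
Qed.

Lemma cartesian_cancel (F G H : Functor A D) (d : NatTrans F G) (m : NatTrans G H) :
  cartesian m -> cartesian (nt_comp m d) -> cartesian d.
Proof.
  intros Hm Hmd a b f. apply pullback_sym.
  apply pullback_cancel with (y := m a) (r := fmap H f) (w := m b).
  - symmetry. apply naturality.
  - apply pullback_sym, Hm.
  - apply pullback_sym. exact (Hmd a b f).
Qed.

Lemma cartesian_componentwise_iff (K : MorClass D) (t : A) (to_t : forall a : A, Hom a t)
  (F G : Functor A D) (al : NatTrans F G) :
  stable K -> cartesian al -> (K _ _ (al t) <-> componentwise K al).
Proof.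
  intros hK hal. split.
  - intros Ht a. exact (hK _ _ _ _ _ _ _ _ (hal a t (to_t a)) Ht).
  - intro Hc. exact (Hc t).
Qed.

Lemma restrict_cart_Eprime_iff (E : MorClass D) (t : A) (to_t : forall a : A, Hom a t) :
  stable E -> forall (F G : Functor A D) (al : NatTrans F G),
  restrict_cart (Eprime t E) al <-> restrict_cart (componentwise E) al.
Proof.
  intros hE F G al. unfold restrict_cart, Eprime.
  split; intros [Hal Cal]; split; try exact Cal.
  - exact (proj1 (cartesian_componentwise_iff to_t hE Cal) Hal).
  - exact (proj2 (cartesian_componentwise_iff to_t hE Cal) Hal).
Qed.

Lemma restrict_cart_Mprime_iff (M : MorClass D) (t : A) (to_t : forall a : A, Hom a t) :
  stable M -> forall (F G : Functor A D) (al : NatTrans F G),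
  restrict_cart (Mprime t M) al <-> restrict_cart (componentwise M) al.
Proof.
  intros hM F G al. unfold restrict_cart, Mprime. split.
  - intros [[Cal Hal] _]. split; [|exact Cal].
    exact (proj1 (cartesian_componentwise_iff to_t hM Cal) Hal).
  - intros [Hal Cal]. split; [split|]; [exact Cal| |exact Cal].
    exact (proj2 (cartesian_componentwise_iff to_t hM Cal) Hal).
Qed.

Lemma iso_component (W : MorClass (FunCat A D)) (F G : Functor A D) (al : NatTrans F G) :
  is_iso_in W al -> forall a : A, is_iso_in (fun _ _ _ => True) (al a).
Proof.
  intros [_ [be [_ [H1 H2]]]] a. split; [exact I|].
  exists (be a). split; [exact I|]. split.
  - exact (f_equal (fun n : NatTrans F F => n a) H1).
  - exact (f_equal (fun n : NatTrans G G => n a) H2).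
Qed.

End Cartesian.

Section Diagonal.
Variables (A D : Category) (E M : MorClass D).
Hypothesis hofs : OFS E M.
Variables (F G H K : Functor A D) (e : NatTrans F G) (f : NatTrans F H)
  (g : NatTrans G K) (m : NatTrans H K).
Hypotheses (He : componentwise E e) (Hm : componentwise M m) (Hsq : nt_comp g e = nt_comp m f).

Lemma square_component (x : A) : g x ∘ e x = m x ∘ f x.
Proof. exact (f_equal (fun n : NatTrans F K => n x) Hsq). Qed.

Definition diagonal_cmp (x : A) : Hom (G x) (H x) :=
  proj1_sig (constructive_indefinite_description _
    (OFS_diagonal hofs (He x) (Hm x) (square_component x))).

Lemma diagonal_cmp_spec (x : A) :
  (diagonal_cmp x ∘ e x = f x /\ m x ∘ diagonal_cmp x = g x) /\
  forall dg, dg ∘ e x = f x /\ m x ∘ dg = g x -> diagonal_cmp x = dg.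
Proof.
  unfold diagonal_cmp. destruct constructive_indefinite_description as [dg Hdg]. exact Hdg.
Qed.

(* Both sides are diagonals of the square (K u ∘ g x) ∘ e x = m y ∘ (H u ∘ f x). *)
Lemma diagonal_cmp_natural (x y : A) (u : Hom x y) :
  diagonal_cmp y ∘ fmap G u = fmap H u ∘ diagonal_cmp x.
Proof.
  destruct (diagonal_cmp_spec x) as [[Hx1 Hx2] _].
  destruct (diagonal_cmp_spec y) as [[Hy1 Hy2] _].
  assert (Hs : (fmap K u ∘ g x) ∘ e x = m y ∘ (fmap H u ∘ f x)).
  { rewrite <- comp_assoc, square_component, comp_assoc, <- naturality, comp_assoc.
    reflexivity. }
  destruct (OFS_diagonal hofs (He x) (Hm y) Hs) as [d0 [_ Hu]].
  rewrite <- (Hu (diagonal_cmp y ∘ fmap G u)), <- (Hu (fmap H u ∘ diagonal_cmp x));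
    [reflexivity | split | split].
  - rewrite <- comp_assoc, Hx1. reflexivity.
  - rewrite comp_assoc, naturality, <- comp_assoc, Hx2. reflexivity.
  - rewrite <- comp_assoc, <- naturality, comp_assoc, Hy1. apply naturality.
  - rewrite comp_assoc, Hy2. apply naturality.
Qed.

Definition diagonal : NatTrans G H :=
  {| cmp := diagonal_cmp; naturality := diagonal_cmp_natural |}.

Lemma diagonal_fst : nt_comp diagonal e = f.
Proof. apply nt_eq. intro x. apply (diagonal_cmp_spec x). Qed.

Lemma diagonal_snd : nt_comp m diagonal = g.
Proof. apply nt_eq. intro x. apply (diagonal_cmp_spec x). Qed.

Lemma diagonal_unique (dg : NatTrans G H) :
  nt_comp dg e = f -> nt_comp m dg = g -> dg = diagonal.
Proof.
  intros H1 H2. apply nt_eq. intro x. symmetry. apply (diagonal_cmp_spec x). split.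
  - exact (f_equal (fun n : NatTrans F H => n x) H1).
  - exact (f_equal (fun n : NatTrans G K => n x) H2).
Qed.

Lemma diagonal_cartesian : cartesian m -> cartesian g -> cartesian diagonal.
Proof.
  intros Cm Cg. apply cartesian_cancel with (m := m); [exact Cm|].
  rewrite diagonal_snd. exact Cg.
Qed.

End Diagonal.

Section Factorization.
Variables (A D : Category) (E M : MorClass D).
Hypotheses (hofs : OFS E M) (hstable : stable E).
Variables (t : A) (ht : is_terminal t) (hpb : has_pullbacks D).
Variables (X Z : Functor A D) (h : NatTrans X Z).
Hypothesis h_cart : cartesian h.
Variables (It : D) (et : Hom (X t) It) (mt : Hom It (Z t)).
Hypotheses (het : E et) (hmt : M mt) (h_t : h t = mt ∘ et).

Let bang := terminal_map ht.

Definition image_pullback (a : A) : Pullback (fmap Z (bang a)) mt :=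
  choose_pullback hpb (fmap Z (bang a)) mt.

Definition image_obj (a : A) : D := pb_obj (image_pullback a).

Definition image_m_cmp (a : A) : Hom (image_obj a) (Z a) := pb_fst (image_pullback a).

Definition image_proj (a : A) : Hom (image_obj a) It := pb_snd (image_pullback a).

Lemma image_is_pullback (a : A) :
  is_pullback (image_m_cmp a) (image_proj a) (fmap Z (bang a)) mt.
Proof. exact (pb_is_pullback (image_pullback a)). Qed.

Lemma bang_comp (a b : A) (u : Hom a b) : bang b ∘ u = bang a.
Proof. apply (terminal_hom_unique ht). Qed.

Lemma image_map_square (a b : A) (u : Hom a b) :
  fmap Z (bang b) ∘ (fmap Z u ∘ image_m_cmp a) = mt ∘ image_proj a.
Proof.
  rewrite comp_assoc, <- fmap_comp, bang_comp. exact (proj1 (image_is_pullback a)).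
Qed.

Definition image_map (a b : A) (u : Hom a b) : Hom (image_obj a) (image_obj b) :=
  pullback_lift (image_is_pullback b) (image_map_square u).

Lemma image_map_m (a b : A) (u : Hom a b) :
  image_m_cmp b ∘ image_map u = fmap Z u ∘ image_m_cmp a.
Proof. apply pullback_lift_spec. Qed.

Lemma image_map_proj (a b : A) (u : Hom a b) : image_proj b ∘ image_map u = image_proj a.
Proof. apply pullback_lift_spec. Qed.

Lemma image_map_id (a : A) : image_map (idm a) = idm (image_obj a).
Proof.
  apply (pullback_jointly_monic (image_is_pullback a)).
  - rewrite image_map_m, fmap_id, comp_id_l, comp_id_r. reflexivity.
  - rewrite image_map_proj, comp_id_r. reflexivity.
Qed.

Lemma image_map_comp (a b c : A) (u : Hom a b) (v : Hom b c) :
  image_map (v ∘ u) = image_map v ∘ image_map u.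
Proof.
  apply (pullback_jointly_monic (image_is_pullback c)).
  - rewrite image_map_m, comp_assoc, image_map_m, <- comp_assoc, image_map_m,
      fmap_comp, comp_assoc. reflexivity.
  - rewrite image_map_proj, comp_assoc, !image_map_proj. reflexivity.
Qed.

Definition image : Functor A D :=
  {| fobj := image_obj; fmap := image_map;
     fmap_id := image_map_id; fmap_comp := image_map_comp |}.

Definition image_m : NatTrans image Z := @Build_NatTrans A D image Z image_m_cmp image_map_m.

Lemma image_e_square (a : A) :
  fmap Z (bang a) ∘ h a = mt ∘ (et ∘ fmap X (bang a)).
Proof. rewrite <- naturality, h_t, comp_assoc. reflexivity. Qed.

Definition image_e_cmp (a : A) : Hom (X a) (image_obj a) :=
  pullback_lift (image_is_pullback a) (image_e_square a).

Lemma image_e_m (a : A) : image_m_cmp a ∘ image_e_cmp a = h a.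
Proof. apply pullback_lift_spec. Qed.

Lemma image_e_proj (a : A) : image_proj a ∘ image_e_cmp a = et ∘ fmap X (bang a).
Proof. apply pullback_lift_spec. Qed.

Lemma image_e_natural (a b : A) (u : Hom a b) :
  image_e_cmp b ∘ fmap X u = image_map u ∘ image_e_cmp a.
Proof.
  apply (pullback_jointly_monic (image_is_pullback b)).
  - rewrite !comp_assoc, image_e_m, image_map_m, naturality, <- comp_assoc, image_e_m.
    reflexivity.
  - rewrite !comp_assoc, image_e_proj, image_map_proj, image_e_proj, <- comp_assoc,
      <- fmap_comp, bang_comp. reflexivity.
Qed.

Definition image_e : NatTrans X image := @Build_NatTrans A D X image image_e_cmp image_e_natural.

Lemma image_factorization : h = nt_comp image_m image_e.
Proof. apply nt_eq. intro a. symmetry. apply image_e_m. Qed.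

Lemma image_m_cartesian : cartesian image_m.
Proof.
  intros a b u. simpl.
  apply pullback_cancel with (y := image_proj b) (r := mt) (w := fmap Z (bang b)).
  - apply image_map_m.
  - apply pullback_sym, image_is_pullback.
  - rewrite image_map_proj, <- fmap_comp, bang_comp. apply pullback_sym, image_is_pullback.
Qed.

Lemma image_m_M : componentwise M image_m.
Proof. intro a. exact (OFS_stable_M hofs (pullback_sym (image_is_pullback a)) hmt). Qed.

Lemma image_e_cartesian : cartesian image_e.
Proof.
  apply cartesian_cancel with (m := image_m); [exact image_m_cartesian|].
  rewrite <- image_factorization. exact h_cart.
Qed.

(* e_a is the pullback of e_1 along the projection I a → I 1 = It: cancel the
   pullback square of I a from the naturality square of h at a → 1. *)
Lemma image_e_E : componentwise E image_e.
Proof.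
  intro a.
  apply (hstable (pa := fmap X (bang a)) (e' := image_e_cmp a) (e := et) (g := image_proj a));
    [|exact het].
  apply pullback_sym.
  apply pullback_cancel with (y := image_m_cmp a) (r := fmap Z (bang a)) (w := mt).
  - apply image_e_proj.
  - apply image_is_pullback.
  - simpl. rewrite image_e_m, <- h_t. apply pullback_sym, h_cart.
Qed.

End Factorization.

Lemma cartesian_factorization (A D : Category) (E M : MorClass D) (t : A)
  (ht : is_terminal t) (hpb : has_pullbacks D) (hofs : OFS E M) (hstable : stable E)
  (X Z : Functor A D) (h : NatTrans X Z) :
  cartesian h ->
  exists (I : Functor A D) (e : NatTrans X I) (m : NatTrans I Z),
    restrict_cart (componentwise E) e /\ restrict_cart (componentwise M) m /\
    h = nt_comp m e.
Proof.
  intro h_cart.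
  pose proof hofs as (_ & _ & _ & _ & _ & _ & _ & Hfact).
  destruct (Hfact _ _ (h t) I) as (It & et & mt & het & hmt & h_t).
  exists (image ht hpb mt), (image_e ht hpb h_t), (image_m ht hpb mt).
  split; [split|split; [split|]].
  - exact (image_e_E hstable ht hpb h_cart het h_t).
  - exact (image_e_cartesian ht hpb h_cart h_t).
  - exact (image_m_M hofs ht hpb hmt).
  - exact (image_m_cartesian ht hpb mt).
  - exact (image_factorization ht hpb h_t).
Qed.

Lemma componentwise_OFS_cartesian (A D : Category) (E M : MorClass D) (t : A)
  (ht : is_terminal t) (hpb : has_pullbacks D) (hofs : OFS E M) (hstable : stable E) :
  OFS_in (@cartesian A D) (restrict_cart (componentwise E)) (restrict_cart (componentwise M)).
Proof.
  pose proof hofs as (_ & _ & HisoE & HisoM & HcompE & HcompM & _ & _).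
  split; [|split; [|split; [|split; [|split; [|split; [|split]]]]]].
  - intros F G al [_ Cal]. exact Cal.
  - intros F G al [_ Cal]. exact Cal.
  - intros F G al Hiso. split; [|exact (proj1 Hiso)].
    intro a. apply HisoE, (iso_component Hiso).
  - intros F G al Hiso. split; [|exact (proj1 Hiso)].
    intro a. apply HisoM, (iso_component Hiso).
  - intros F G H al be [Hal Cal] [Hbe Cbe]. split; [|exact (cartesian_comp Cal Cbe)].
    intro a. exact (HcompE _ _ _ _ _ (Hal a) (Hbe a)).
  - intros F G H al be [Hal Cal] [Hbe Cbe]. split; [|exact (cartesian_comp Cal Cbe)].
    intro a. exact (HcompM _ _ _ _ _ (Hal a) (Hbe a)).
  - intros F G H K e f g m [He _] [Hm Cm] _ Cg Hsq.
    exists (diagonal hofs He Hm Hsq). split; [split; [|split]|].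
    + exact (diagonal_cartesian hofs He Hm Hsq Cm Cg).
    + exact (diagonal_fst hofs He Hm Hsq).
    + exact (diagonal_snd hofs He Hm Hsq).
    + intros dg _ H1 H2. exact (diagonal_unique hofs He Hm Hsq H1 H2).
  - intros X Z h Ch. exact (cartesian_factorization ht hpb hofs hstable Ch).
Qed.

Theorem proposition4p9 (A D : Category) (E M : MorClass D) (t : A)
  (ht : is_terminal t) (hpb : has_pullbacks D)
  (hofs : OFS E M) (hstable : stable E) :
  (* the two restrictions to CartNt[A,D] have the same classes ... *)
  (forall (F G : Functor A D) (al : NatTrans F G),
      restrict_cart (Eprime t E) al <-> restrict_cart (componentwise E) al) /\
  (forall (F G : Functor A D) (al : NatTrans F G),
      restrict_cart (Mprime t M) al <-> restrict_cart (componentwise M) al) /\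
  (* ... and they form a factorization system on CartNt[A,D] *)
  OFS_in (@cartesian A D) (restrict_cart (Eprime t E)) (restrict_cart (Mprime t M)) /\
  OFS_in (@cartesian A D) (restrict_cart (componentwise E)) (restrict_cart (componentwise M)).
Proof.
  pose proof (restrict_cart_Eprime_iff (terminal_map ht) hstable) as HE.
  pose proof (restrict_cart_Mprime_iff (terminal_map ht) (OFS_stable_M hofs)) as HM.
  pose proof (componentwise_OFS_cartesian ht hpb hofs hstable) as Hofs.
  split; [exact HE|]. split; [exact HM|]. split; [|exact Hofs].
  apply (OFS_in_iff (W := @cartesian A D) (E := restrict_cart (componentwise E))
           (M := restrict_cart (componentwise M))); [| |exact Hofs].
  - intros F G al. symmetry. apply HE.
  - intros F G al. symmetry. apply HM.
Qed.
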